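(* Let $\Omega=\{1,\dots,m\}$, $n\ge1$, $b\in\mathbb{R}^n_{+}$, $v\in\mathbb{R}^{m\times n}_{+}$, and $u\in\mathbb{R}^{m\times m}_{+}$ with $u_{pp}=0$ for all $p$. Define $h:2^{\Omega}\to\mathbb{R}$ by $h(\emptyset)=0$ and $h(\mathcal{S})=\sum_{j=1}^nb_j\max_{i\in\mathcal{S}}v_{ij}+\sum_{(p,q)\in\mathcal{S}\times\mathcal{S}}u_{pq}$ for $\mathcal{S}\neq\emptyset$. Then for all $\ell\in\{0,\dots,m-1\}$ and $k\in\{0,\dots,m\}$, $d^{\ell,k}[h]\le|\mathrm{supp}(u)|\max\{u_{pq}:(p,q)\in\Omega^2\}$.
   Context: $\mathrm{supp}(u)=\{(p,q)\in\Omega^2:u_{pq}>0\}$. $d^{\ell,k}[h]=\max\{h(\mathcal{A}\cup\mathcal{B}\cup\{s\})-h(\mathcal{A}\cup\mathcal{B})-h(\mathcal{A}\cup\{s\})+h(\mathcal{A}):\mathcal{A},\mathcal{B}\subseteq\Omega,s\in\Omega,|\mathcal{A}|=\ell,|\mathcal{B}|=k\}$. *)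

From HB Require Import structures.
From mathcomp Require Import all_boot all_order all_algebra.
Set Implicit Arguments. Unset Strict Implicit. Unset Printing Implicit Defensive.
Import Order.TTheory GRing.Theory Num.Theory.
Local Open Scope ring_scope.

(* Omega = 'I_m (i.e. {1..m} shifted to {0..m-1}); subsets are {set 'I_m}. *)

(* The max over the nonempty S is a big max with neutral 0; since v >= 0
   this equals the genuine maximum. *)
Definition hfun (R : realFieldType) (m n : nat) (b : 'I_n -> R)
  (v : 'I_m -> 'I_n -> R) (u : 'I_m -> 'I_m -> R) (S : {set 'I_m}) : R :=
  if S == set0 then 0 else
    \sum_(j < n) b j * \big[Num.max/0]_(i in S) v i j
    + \sum_(p in S) \sum_(q in S) u p q.

Definition ddiff (R : realFieldType) (m : nat) (h : {set 'I_m} -> R)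
  (A B : {set 'I_m}) (s : 'I_m) : R :=
  h (A :|: B :|: [set s]) - h (A :|: B) - h (A :|: [set s]) + h A.

(* Computed as the max of the (finite) list of candidate values; the
   initial value is the head of that list, so for a nonempty candidate set
   this is exactly the maximum (for an empty candidate set it is 0, a
   convention irrelevant here since the set is nonempty when l, k <= m). *)
Definition dlk (R : realFieldType) (m : nat) (h : {set 'I_m} -> R)
  (l k : nat) : R :=
  let vals := [seq ddiff h x.1.1 x.1.2 x.2 |
                x <- enum [set x : {set 'I_m} * {set 'I_m} * 'I_m |
                           (#|x.1.1| == l) && (#|x.1.2| == k)]] in
  \big[Num.max/head 0 vals]_(y <- vals) y.

Definition supp (R : realFieldType) (m : nat) (u : 'I_m -> 'I_m -> R)
  : {set 'I_m * 'I_m} :=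
  [set pq | 0 < u pq.1 pq.2].

(* max {u_pq : (p,q) in Omega^2}; big max with neutral 0, which equals the
   genuine max since u >= 0 and Omega is nonempty (m >= 1). *)
Definition umax (R : realFieldType) (m : nat) (u : 'I_m -> 'I_m -> R) : R :=
  \big[Num.max/0]_(pq : 'I_m * 'I_m) u pq.1 pq.2.

(* The function h splits as a weighted max-coverage part plus the pair weight
   S |-> sum_{p,q in S} u_pq.  The coverage part is submodular (its second
   differences are <= 0), because adding s raises a running maximum by less
   when the maximum is already larger.  The pair weight is monotone and
   nonnegative, so each of its second differences is at most its value on
   all of Omega, namely sum_{p,q} u_pq, which is at most |supp u| max u. *)
From HB Require Import structures.
From mathcomp Require Import all_boot all_order all_algebra.
From mathcomp Require Import ring lra.
Set Implicit Arguments. Unset Strict Implicit. Unset Printing Implicit Defensive.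
Import Order.TTheory GRing.Theory Num.Theory.
Local Open Scope ring_scope.

Section RealLemmas.
Variable R : realFieldType.

Lemma max_subr_le (x y z : R) : x <= y -> Num.max y z - y <= Num.max x z - x.
Proof. by move=> lexy; rewrite !maxEle; case: ifP; case: ifP; lra. Qed.

Lemma ler_sum_subset (T : finType) (S S' : {set T}) (F : T -> R) :
  S \subset S' -> (forall i, 0 <= F i) ->
  \sum_(i in S) F i <= \sum_(i in S') F i.
Proof.
move=> subSS' F0; rewrite [leRHS](big_setID S) (setIidPr subSS') /=.
by rewrite lerDl sumr_ge0.
Qed.

Lemma sumr_le_card_support_bigmax (T : finType) (F : T -> R) :
  (forall i, 0 <= F i) ->
  \sum_i F i <= #|[set i | 0 < F i]|%:R * \big[Num.max/0]_i F i.
Proof.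
move=> F0; rewrite mulr_natl -sumr_const [leRHS]big_mkcond /=.
apply: ler_sum => i _; rewrite inE; case: ifP => [_|]; first exact: le_bigmax.
by move/negbT; rewrite -leNgt.
Qed.

End RealLemmas.

Section SecondDifference.
Variables (R : realFieldType) (m : nat).
Implicit Types (h g : {set 'I_m} -> R) (A B S T : {set 'I_m}) (s : 'I_m).

Lemma ddiffD h g A B s :
  ddiff (fun S => h S + g S) A B s = ddiff h A B s + ddiff g A B s.
Proof. by rewrite /ddiff; ring. Qed.

Lemma ddiff_bigmax_le0 (f : 'I_m -> R) A B s :
  ddiff (fun S => \big[Num.max/0]_(i in S) f i) A B s <= 0.
Proof.
rewrite /ddiff (bigmaxU _ (A :|: B)) (bigmaxU _ A [set s]) !bigmax_set1.
have := max_subr_le (Num.max (f s) 0) (bigmaxUl 0 A B f); lra.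
Qed.

Lemma ddiff_le_monotone g A B s :
  (forall S T, S \subset T -> g S <= g T) -> 0 <= g set0 ->
  ddiff g A B s <= g setT.
Proof.
move=> g_mono g0_ge0; rewrite /ddiff.
have := g_mono _ _ (subsetT (A :|: B :|: [set s])).
have := g_mono _ _ (subsetUl A B).
have := g_mono _ _ (sub0set (A :|: [set s])).
lra.
Qed.

End SecondDifference.

Section WeightedCoverage.
Variables (R : realFieldType) (m n : nat).
Variables (b : 'I_n -> R) (v : 'I_m -> 'I_n -> R) (u : 'I_m -> 'I_m -> R).
Hypothesis b_ge0 : forall j, 0 <= b j.
Hypothesis u_ge0 : forall p q, 0 <= u p q.
Implicit Types (A B S T : {set 'I_m}) (s : 'I_m).

Definition maxcover (S : {set 'I_m}) : R :=
  \sum_(j < n) b j * \big[Num.max/0]_(i in S) v i j.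

Definition pairweight (S : {set 'I_m}) : R :=
  \sum_(p in S) \sum_(q in S) u p q.

Lemma hfunE S : hfun b v u S = maxcover S + pairweight S.
Proof.
rewrite /hfun; case: eqP => [->|//].
rewrite /maxcover /pairweight !big_set0 addr0 big1 // => j _.
by rewrite big_set0 mulr0.
Qed.

Lemma ddiff_maxcover_le0 A B s : ddiff maxcover A B s <= 0.
Proof.
rewrite /ddiff /maxcover -!sumrB -big_split /=; apply: sumr_le0 => j _.
rewrite -!mulrBr -mulrDr; apply: mulr_ge0_le0 => //.
by have := ddiff_bigmax_le0 (v^~ j) A B s; rewrite /ddiff.
Qed.

Lemma pairweight_subset S T : S \subset T -> pairweight S <= pairweight T.
Proof.
move=> subST; apply: (le_trans (ler_sum_subset subST _)) => [p|].
  exact: sumr_ge0.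
by apply: ler_sum => p _; apply: ler_sum_subset.
Qed.

Lemma ddiff_hfun_le A B s :
  ddiff (hfun b v u) A B s <= \sum_(pq : 'I_m * 'I_m) u pq.1 pq.2.
Proof.
have -> : ddiff (hfun b v u) A B s =
           ddiff (fun S => maxcover S + pairweight S) A B s.
  by rewrite /ddiff !hfunE.
rewrite ddiffD -[X in _ <= X]add0r; apply: lerD; first exact: ddiff_maxcover_le0.
have -> : \sum_(pq : 'I_m * 'I_m) u pq.1 pq.2 = pairweight setT.
  by rewrite /pairweight pair_big; apply: eq_bigl => pq; rewrite !inE.
apply: ddiff_le_monotone; first exact: pairweight_subset.
by rewrite /pairweight big_set0.
Qed.

End WeightedCoverage.

Lemma dlk_le (R : realFieldType) (m : nat) (h : {set 'I_m} -> R) l k c :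
  0 <= c -> (forall A B s, ddiff h A B s <= c) -> dlk h l k <= c.
Proof.
move=> c_ge0 ddiff_le; rewrite /dlk /=; set vals := [seq _ | _ <- _].
have vals_le y : y \in vals -> y <= c by case/mapP=> -[[A B] s] _ ->.
rewrite big_seq_cond; elim/big_ind: _ => [|x y|y /andP[/vals_le//]].
- by case: vals vals_le => //= y t; apply; rewrite inE eqxx.
- by rewrite ge_max => -> ->.
Qed.

Theorem mainTheorem17 (R : realFieldType) (m n : nat)
  (b : 'I_n -> R) (v : 'I_m -> 'I_n -> R) (u : 'I_m -> 'I_m -> R) :
  (1 <= n)%N ->
  (forall j, 0 <= b j) ->
  (forall i j, 0 <= v i j) ->
  (forall p q, 0 <= u p q) ->
  (forall p, u p p = 0) ->
  forall l k : nat, (l < m)%N -> (k <= m)%N ->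
    dlk (hfun b v u) l k <= #|supp u|%:R * umax u.
Proof.
(* The bound holds for every triple (A, B, s). *)
move=> _ b_ge0 _ u_ge0 _ l k _ _.
apply: dlk_le => [|A B s]; first by rewrite mulr_ge0 ?ler0n ?bigmax_ge_id.
apply: le_trans (ddiff_hfun_le v b_ge0 u_ge0 A B s) _.
exact: (sumr_le_card_support_bigmax (fun pq : 'I_m * 'I_m => u_ge0 pq.1 pq.2)).
Qed.
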